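(* Let $q$ be a query with sensitivity $\Delta q>0$, let $0\le a<c$, and let the random scale $b$ be such that $1/b$ is uniformly distributed on $[a,c]$. Then the R$^2$DP Laplace mechanism $\mathcal M_q(d,b)=q(d)+\mathrm{Lap}(b)$ is $$\ln\left[\frac{\alpha^2-\beta^2}{2\big((1+\beta)e^{-\beta}-(1+\alpha)e^{-\alpha}\big)}\right]\text{-differentially private},$$ where $\alpha=a\,\Delta q$ and $\beta=c\,\Delta q$.
   Context: $\mathrm{Lap}(b)$ is the zero-mean Laplace distribution with density $\frac{1}{2b}e^{-|x|/b}$; the R$^2$DP Laplace mechanism draws the random scale $b$ (independently of the data) and then adds $\mathrm{Lap}(b)$ noise to $q(d)$. $\Delta q=\max|q(d)-q(d')|$ over datasets $d,d'$ differing in one individual's data. A mechanism is $\epsilon$-differentially private if $\mathbb P(\mathcal M(d)\in S)\le e^\epsilon\mathbb P(\mathcal M(d')\in S)$ for all such $d,d'$ and measurable $S$. *)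

From HB Require Import structures.
From mathcomp Require Import all_boot all_order all_algebra.
From mathcomp Require Import all_classical all_reals all_analysis.
Set Implicit Arguments. Unset Strict Implicit. Unset Printing Implicit Defensive.
Import Order.TTheory GRing.Theory Num.Theory.
Local Open Scope classical_set_scope.
Local Open Scope ring_scope.

Definition laplace_pdf (R : realType) (b x : R) : R :=
  (2 * b)^-1 * expR (- (`|x| / b)).

Definition laplace_shift_prob (R : realType) (b m : R) (S : set R) : \bar R :=
  (\int[@lebesgue_measure R]_(x in S) (laplace_pdf b (x - m))%:E)%E.

(* R^2DP Laplace mechanism with random scale b such that 1/b ~ Uniform[a,c],
   b independent of the data and the Laplace noise drawn given b:
   P(M_q(d,b) \in S) = E_{s ~ U[a,c]} [ P(q d + Lap(1/s) \in S) ]. *)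
Definition r2dp_uniform_laplace_prob (R : realType) (a c : R) (ac : a < c)
  (D : Type) (q : D -> R) (d : D) (S : set R) : \bar R :=
  (\int[uniform_prob ac]_s laplace_shift_prob s^-1 (q d) S)%E.

Definition is_sensitivity (R : realType) (D : Type) (nbr : D -> D -> Prop)
  (q : D -> R) (dq : R) : Prop :=
  (forall d d', nbr d d' -> `|q d - q d'| <= dq) /\
  (exists d d', nbr d d' /\ `|q d - q d'| = dq).

Definition differentially_private (R : realType) (D : Type)
  (nbr : D -> D -> Prop) (eps : R) (M : D -> set R -> \bar R) : Prop :=
  forall d d', nbr d d' -> forall S : set R, measurable S ->
    (M d S <= (expR eps)%:E * M d' S)%E.

(** Drawing the rate s = 1/b uniformly from [a, c] and exchanging the two
    integrals, the output density at x is (c - a)^-1 h(|x - q d|) with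
    h(t) = \int_a^c (s/2) e^{-st} ds.  Chebyshev's integral inequality for the
    weight s/2 and the two decreasing functions e^{-st}, e^{-su} gives
    h(t) h(u) <= h(0) h(t + u).  As h is nonincreasing and
    |x - q d'| <= |x - q d| + Δq, it follows that
    h(|x - q d|) <= (h(0) / h(Δq)) h(|x - q d'|), and integrating over S gives
    ε-differential privacy with e^ε = h(0) / h(Δq), whose closed form is the
    ratio in the statement. *)

From HB Require Import structures.
From mathcomp Require Import all_boot all_order all_algebra.
From mathcomp Require Import all_classical all_reals all_analysis.
From mathcomp Require Import measurable_realfun.
From mathcomp Require Import ring lra.
Import Order.TTheory GRing.Theory Num.Theory.
Import numFieldNormedType.Exports.
Local Open Scope classical_set_scope.
Local Open Scope ring_scope.

Section integral_section.
Context {d1 d2 : measure_display} {T1 : measurableType d1}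
  {T2 : measurableType d2} {R : realType}.
Variable nu : {sigma_finite_measure set T2 -> \bar R}.

Lemma measurable_fun_integral_section (k : T1 * T2 -> R) (B : set T2) :
  measurable B -> measurable_fun setT k ->
  measurable_fun setT (fun x => \int[nu]_(y in B) (k (x, y))%:E)%E.
Proof.
move=> mB mk.
have mB2 : measurable_fun setT (fun z : T1 * T2 => \1_B z.2 : R).
  by apply: measurableT_comp; [exact: measurable_indic|exact: measurable_snd].
(* Tonelli's measurability applies to the positive and negative parts of k. *)
have -> : (fun x => \int[nu]_(y in B) (k (x, y))%:E)%E =
    (fubini_F nu (fun z => (Num.max (k z) 0 * \1_B z.2)%:E) \-
     fubini_F nu (fun z => (Num.max (- k z) 0 * \1_B z.2)%:E))%E.
  apply/funext => x; rewrite integralE /fubini_F /=.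
  congr (_ - _)%E; rewrite integral_mkcond; apply: eq_integral => y _.
    by rewrite patchE funeposE indicE; case: ifPn; rewrite ?mulr1 ?mulr0 // EFin_max.
  by rewrite patchE funenegE indicE; case: ifPn; rewrite ?mulr1 ?mulr0 // -EFinN EFin_max.
apply: emeasurable_funB; apply: measurable_fun_fubini_tonelli_F => [|z];
  rewrite ?lee_fin ?mulr_ge0 ?le_max ?lexx ?orbT //;
  by apply/measurable_EFinP/measurable_funM => //; apply: measurable_maxr => //;
     exact: measurableT_comp.
Qed.

End integral_section.

Section fubini_tonelli_in.
Context {d1 d2 : measure_display} {T1 : measurableType d1}
  {T2 : measurableType d2} {R : realType}.
Variable m1 : {sigma_finite_measure set T1 -> \bar R}.
Variable m2 : {sigma_finite_measure set T2 -> \bar R}.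

Lemma fubini_tonelli_in (A : set T1) (B : set T2) (f : T1 * T2 -> \bar R) :
  measurable A -> measurable B -> measurable_fun setT f ->
  (forall x y, A x -> B y -> (0 <= f (x, y))%E) ->
  (\int[m1]_(x in A) \int[m2]_(y in B) f (x, y) =
   \int[m2]_(y in B) \int[m1]_(x in A) f (x, y))%E.
Proof.
move=> mA mB mf f0.
pose g := f \_ (A `*` B).
have mg : measurable_fun setT g.
  apply/(measurable_restrictT _ _).1; first exact: measurableX.
  exact: measurable_funS mf.
have g0 z : (0 <= g z)%E.
  by rewrite /g patchE; case: ifPn => // /set_mem[/= Az Bz]; case: z Az Bz => x y; exact: f0.
have inner_mkcond x : (\int[m2]_y g (x, y) =
    if x \in A then \int[m2]_(y in B) f (x, y) else 0)%E.
  case: ifPn => xA; last first.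
    by apply: integral0_eq => y _; rewrite /g patchE in_setX (negbTE xA).
  rewrite [RHS]integral_mkcond; apply: eq_integral => y _.
  by rewrite /g !patchE !in_setX xA.
have outer_mkcond y : (\int[m1]_x g (x, y) =
    if y \in B then \int[m1]_(x in A) f (x, y) else 0)%E.
  case: ifPn => yB; last first.
    by apply: integral0_eq => x _; rewrite /g patchE in_setX (negbTE yB) andbF.
  rewrite [RHS]integral_mkcond; apply: eq_integral => x _.
  by rewrite /g !patchE !in_setX yB andbT.
rewrite integral_mkcond [RHS]integral_mkcond.
transitivity (\int[m1]_x \int[m2]_y g (x, y))%E.
  by apply: eq_integral => x _; rewrite inner_mkcond patchE.
rewrite (fubini_tonelli g mg g0); apply: eq_integral => y _.
by rewrite outer_mkcond patchE.
Qed.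
End fubini_tonelli_in.

Section uniform.
Context {R : realType}.
Local Notation mu := (@lebesgue_measure R).

Lemma integral_uniform_itv (a b : R) (ab : a < b) (F : R -> \bar R) :
  measurable_fun setT F -> (forall x, a <= x <= b -> (0 <= F x)%E) ->
  (\int[uniform_prob ab]_x F x =
   (b - a)^-1%:E * \int[mu]_(x in `[a, b]) F x)%E.
Proof.
move=> mF F0.
have mFab : measurable_fun setT (F \_ `[a, b]).
  by apply/(measurable_restrictT _ _).1 => //; exact: measurable_funS mF.
transitivity (\int[uniform_prob ab]_x (F \_ `[a, b]) x)%E.
  apply: ae_eq_integral => //; exists (~` `[a, b]); split.
  - exact: measurableC.
  - apply: integral0_eq => x /= xab; rewrite /uniform_pdf.
    by case: ifPn => // xab'; exfalso; apply: xab; rewrite /= in_itv.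
  - by move=> x /= + xab; apply; rewrite patchE mem_set.
rewrite integral_uniform //; last first.
  by move=> x; rewrite patchE; case: ifPn => // /set_mem; rewrite /= in_itv => /F0.
by congr (_ * _)%E; apply: eq_integral => x xab; rewrite patchE xab.
Qed.

Lemma integral_itv_primitive (f F : R -> R) (a b : R) : a < b -> continuous f ->
  (forall x : R, is_derive x (1 : R) F (f x)) ->
  (\int[mu]_(x in `[a, b]) (f x)%:E = (F b - F a)%:E)%E.
Proof.
move=> ab cf dF.
have cF x : {for x, continuous F}.
  by apply/differentiable_continuous/derivable1_diffP; exact: ex_derive.
rewrite (@continuous_FTC2 _ f F _ _ ab) ?EFinB //.
- by apply: continuous_in_subspaceT => x _; exact: cf.
- split; first by move=> x _; exact: ex_derive.
  + exact: cvg_at_right_filter (cF a).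
  + exact: cvg_at_left_filter (cF b).
- by move=> x _; rewrite derive1E; exact: derive_val.
Qed.

End uniform.

Section chebyshev_integral.
Local Open Scope ereal_scope.
Context {d : measure_display} {T : measurableType d} {R : realType}.
Variables (mu : {measure set T -> \bar R}) (A : set T) (w f g : T -> R).
Hypotheses (mA : measurable A) (mw : measurable_fun A w)
  (mf : measurable_fun A f) (mg : measurable_fun A g).
Hypotheses (w0 : forall x, A x -> (0 <= w x)%R) (f0 : forall x, A x -> (0 <= f x)%R)
  (g0 : forall x, A x -> (0 <= g x)%R).
Hypothesis similarly_ordered :
  forall x y, A x -> A y -> (0 <= (f x - f y) * (g x - g y))%R.

Let integral_ge0_in (u : T -> R) : (forall x, A x -> 0 <= u x)%R ->
  0 <= \int[mu]_(x in A) (u x)%:E.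
Proof. by move=> u0; apply: integral_ge0 => x Ax; rewrite lee_fin u0. Qed.

Let integralZD (u v : T -> R) (k l : \bar R) :
  measurable_fun A u -> measurable_fun A v ->
  (forall x, A x -> 0 <= u x)%R -> (forall x, A x -> 0 <= v x)%R ->
  0 <= k -> 0 <= l ->
  k * \int[mu]_(x in A) (u x)%:E + l * \int[mu]_(x in A) (v x)%:E =
  \int[mu]_(x in A) (k * (u x)%:E + l * (v x)%:E).
Proof.
move=> mu_ mv u0 v0 k0 l0.
have ge0 (h : T -> R) m : (forall x, A x -> 0 <= h x)%R -> 0 <= m ->
    forall x, A x -> 0 <= m * (h x)%:E.
  by move=> h0 m0 x Ax; rewrite mule_ge0 // lee_fin h0.
rewrite -!ge0_integralZl //; [|exact/measurable_EFinP..].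
by rewrite ge0_integralD //; [exact: ge0|exact/measurable_funeM/measurable_EFinP|
  exact: ge0|exact/measurable_funeM/measurable_EFinP].
Qed.

(* Integrate 0 <= w x w y (f x - f y) (g x - g y) over A x A; the double
   integrals are iterated one at a time, pulling each outer factor out as a
   constant, so no Fubini theorem is needed. *)
Lemma chebyshev_integral :
  \int[mu]_(x in A) (w x * f x)%:E * \int[mu]_(x in A) (w x * g x)%:E <=
  \int[mu]_(x in A) (w x)%:E * \int[mu]_(x in A) (w x * (f x * g x))%:E.
Proof.
set I := fun u : T -> R => \int[mu]_(x in A) (u x)%:E.
have wf0 x : A x -> (0 <= w x * f x)%R by move=> Ax; rewrite mulr_ge0 ?w0 ?f0.
have wg0 x : A x -> (0 <= w x * g x)%R by move=> Ax; rewrite mulr_ge0 ?w0 ?g0.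
have wfg0 x : A x -> (0 <= w x * (f x * g x))%R.
  by move=> Ax; rewrite !mulr_ge0 ?w0 ?f0 ?g0.
have mwf : measurable_fun A (fun x => w x * f x)%R by exact: measurable_funM.
have mwg : measurable_fun A (fun x => w x * g x)%R by exact: measurable_funM.
have mwfg : measurable_fun A (fun x => w x * (f x * g x))%R.
  by apply: measurable_funM => //; exact: measurable_funM.
have mZD (u v : T -> R) k l : measurable_fun A u -> measurable_fun A v ->
    measurable_fun A (fun x => k * (u x)%:E + l * (v x)%:E).
  by move=> mu_ mv; apply: emeasurable_funD; exact/measurable_funeM/measurable_EFinP.
have ge0ZD (u v : T -> R) k l : (forall x, A x -> 0 <= u x)%R ->
    (forall x, A x -> 0 <= v x)%R -> 0 <= k -> 0 <= l ->
    forall x, A x -> 0 <= k * (u x)%:E + l * (v x)%:E.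
  by move=> u0 v0 k0 l0 x Ax; rewrite adde_ge0 // mule_ge0 // lee_fin ?u0 ?v0.
suff : I (fun x => w x * f x)%R * I (fun x => w x * g x)%R *+ 2 <=
    I w * I (fun x => w x * (f x * g x))%R *+ 2.
  by rewrite -!mule_natl lee_pmul2l.
rewrite !mule2n {1}muleC [X in _ <= X + _]muleC.
rewrite !integralZD // ?integral_ge0_in //.
apply: ge0_le_integral => //; [by apply: ge0ZD => //; apply: integral_ge0_in
  |exact: mZD|exact: mZD|].
move=> x Ax; rewrite !(muleC (I _)).
rewrite !integralZD // ?lee_fin ?w0 ?wf0 ?wg0 ?wfg0 //.
apply: ge0_le_integral => //; [|exact: mZD|exact: mZD|].
  by apply: ge0ZD => //; rewrite lee_fin ?wf0 ?wg0.
move=> y Ay; rewrite -!EFinM -!EFinD lee_fin -subr_ge0.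
rewrite [X in (0 <= X)%R](_ : _ = w x * w y * ((f x - f y) * (g x - g y)))%R;
  last by ring.
by apply: mulr_ge0; [apply: mulr_ge0; exact: w0|exact: similarly_ordered].
Qed.
End chebyshev_integral.

Section r2dp_laplace.
Context {R : realType}.
Local Notation mu := (@lebesgue_measure R).

Definition laplace_rate_pdf (s t : R) : R := s / 2 * expR (- (s * t)).

Lemma laplace_pdf_inv (s y : R) : laplace_pdf s^-1 y = laplace_rate_pdf s `|y|.
Proof.
rewrite /laplace_pdf /laplace_rate_pdf; congr (_ * expR (- _)).
  by rewrite invfM invrK mulrC.
by rewrite invrK mulrC.
Qed.

Lemma laplace_rate_pdf_ge0 (s t : R) : 0 <= s -> 0 <= laplace_rate_pdf s t.
Proof. by move=> s0; rewrite mulr_ge0 ?expR_ge0 ?divr_ge0. Qed.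

Lemma measurable_fun_laplace_rate_pdf d (T : measurableType d) (s t : T -> R) :
  measurable_fun setT s -> measurable_fun setT t ->
  measurable_fun setT (fun z => laplace_rate_pdf (s z) (t z)).
Proof.
move=> ms mt; apply: measurable_funM; first exact: measurable_funM.
apply: measurableT_comp; first exact: measurable_expR.
apply: measurableT_comp; first exact: oppr_measurable.
exact: measurable_funM.
Qed.

Lemma measurable_laplace_rate_pdf_rate (t : R) (A : set R) :
  measurable_fun A (fun s => (laplace_rate_pdf s t)%:E).
Proof.
by apply/measurable_EFinP/measurable_funS/measurable_fun_laplace_rate_pdf.
Qed.

(* (c - a) times the density, at distance t from the centre, of Laplace noise
   whose rate 1/b is uniform on [a, c]. *)
Definition mixed_pdf (a c t : R) : \bar R :=
  (\int[mu]_(s in `[a, c]) (laplace_rate_pdf s t)%:E)%E.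

Lemma itv_ge0 {a c s : R} : 0 <= a -> `[a, c]%classic s -> 0 <= s.
Proof. by move=> a0; rewrite /= in_itv /= => /andP[/(le_trans a0)]. Qed.

Lemma mixed_pdf_ge0 (a c t : R) : 0 <= a -> (0 <= mixed_pdf a c t)%E.
Proof.
move=> a0; apply: integral_ge0 => s /(itv_ge0 a0) s0.
by rewrite lee_fin laplace_rate_pdf_ge0.
Qed.

Lemma measurable_mixed_pdf (a c m : R) :
  measurable_fun setT (fun x : R => mixed_pdf a c `|x - m|).
Proof.
apply: (measurable_fun_integral_section mu
  (fun z : R * R => laplace_rate_pdf z.2 `|z.1 - m|) _ (measurable_itv _)).
apply: measurable_fun_laplace_rate_pdf; first exact: measurable_snd.
apply: measurableT_comp; first exact: normr_measurable.
exact: measurable_funB.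
Qed.

Lemma r2dp_uniform_laplace_probE (a c : R) (ac : a < c) (D : Type) (q : D -> R)
    (d : D) (S : set R) : 0 <= a -> measurable S ->
  r2dp_uniform_laplace_prob ac q d S =
  ((c - a)^-1%:E * \int[mu]_(x in S) mixed_pdf a c `|x - q d|%R)%E.
Proof.
move=> a0 mS; rewrite /r2dp_uniform_laplace_prob /laplace_shift_prob.
under eq_integral do under eq_integral do rewrite laplace_pdf_inv.
have mpdf : measurable_fun setT (fun z : R * R => laplace_rate_pdf z.1 `|z.2 - q d|).
  apply: measurable_fun_laplace_rate_pdf; first exact: measurable_fst.
  apply: measurableT_comp; first exact: normr_measurable.
  exact: measurable_funB.
rewrite integral_uniform_itv; first last.
- move=> s /andP[sa _]; apply: integral_ge0 => x _.
  by rewrite lee_fin laplace_rate_pdf_ge0 // (le_trans a0 sa).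
- exact: (measurable_fun_integral_section mu _ _ mS mpdf).
rewrite (fubini_tonelli_in mu mu _ _
  (fun z : R * R => (laplace_rate_pdf z.1 `|z.2 - q d|)%:E) (measurable_itv _) mS) //.
  exact/measurable_EFinP.
by move=> s x /(itv_ge0 a0) s0 _; rewrite lee_fin laplace_rate_pdf_ge0.
Qed.

Lemma expRN_mul_nonincreasing (t x y : R) : 0 <= t -> x <= y ->
  expR (- (y * t)) <= expR (- (x * t)).
Proof. by move=> t0 xy; rewrite ler_expR lerN2 ler_wpM2r. Qed.

Lemma mixed_pdf_nonincreasing (a c t1 t2 : R) : 0 <= a -> t1 <= t2 ->
  (mixed_pdf a c t2 <= mixed_pdf a c t1)%E.
Proof.
move=> a0 t12; apply: ge0_le_integral => //.
- by move=> s /(itv_ge0 a0) s0; rewrite lee_fin laplace_rate_pdf_ge0.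
- exact: measurable_laplace_rate_pdf_rate.
- exact: measurable_laplace_rate_pdf_rate.
move=> s /(itv_ge0 a0) s0; rewrite lee_fin ler_wpM2l ?divr_ge0 //.
by rewrite ![s * _]mulrC expRN_mul_nonincreasing.
Qed.

Lemma mixed_pdf_mul_le (a c t u : R) : 0 <= a -> 0 <= t -> 0 <= u ->
  (mixed_pdf a c t * mixed_pdf a c u <= mixed_pdf a c 0 * mixed_pdf a c (t + u))%E.
Proof.
move=> a0 t0 u0.
have mexp (v : R) : measurable_fun `[a, c] (fun s : R => expR (- (s * v))).
  apply: (measurable_funS measurableT) => //.
  apply: measurableT_comp; first exact: measurable_expR.
  apply: measurableT_comp; first exact: oppr_measurable.
  exact: measurable_funM.
have h0E : mixed_pdf a c 0 = (\int[mu]_(s in `[a, c]) (s / 2)%:E)%E.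
  by apply: eq_integral => s _; rewrite /laplace_rate_pdf mulr0 oppr0 expR0 mulr1.
have htuE : mixed_pdf a c (t + u) =
    (\int[mu]_(s in `[a, c]) (s / 2 * (expR (- (s * t)) * expR (- (s * u))))%:E)%E.
  by apply: eq_integral => s _; rewrite /laplace_rate_pdf -expRD mulrDr opprD.
rewrite h0E htuE /mixed_pdf.
apply: (@chebyshev_integral _ _ _ mu _ (fun s => s / 2) (fun s => expR (- (s * t)))
  (fun s => expR (- (s * u))) (measurable_itv `[a, c])) => //.
- by apply: (measurable_funS measurableT) => //; exact: measurable_funM.
- exact: mexp.
- exact: mexp.
- by move=> s /(itv_ge0 a0) s0; rewrite divr_ge0.
move=> x y _ _; have [xy|yx] := leP x y.
  by apply: mulr_ge0; rewrite subr_ge0 expRN_mul_nonincreasing.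
by rewrite -mulrNN; apply: mulr_ge0; rewrite oppr_ge0 subr_le0 expRN_mul_nonincreasing // ltW.
Qed.

Lemma continuous_laplace_rate_pdf (t : R) : continuous (laplace_rate_pdf ^~ t).
Proof.
have -> : laplace_rate_pdf ^~ t = (id * cst 2^-1) * (expR \o - (id * cst t)).
  by apply/funext => s; rewrite /laplace_rate_pdf !fctE.
by move=> x; apply/differentiable_continuous/derivable1_diffP; exact: ex_derive.
Qed.

Lemma mixed_pdf0 (a c : R) : a < c -> mixed_pdf a c 0 = ((c ^+ 2 - a ^+ 2) / 4)%:E.
Proof.
pose F : R -> R := cst 4^-1 * (id * id).
have dF x : is_derive x (1 : R) F (laplace_rate_pdf x 0).
  apply: is_derive_eq; rewrite /laplace_rate_pdf /= !fctE mulr0 oppr0 expR0.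
  by rewrite /GRing.scale /=; field.
move=> ac; rewrite /mixed_pdf (integral_itv_primitive _ _ _ _ ac _ dF) /F ?fctE /=.
  by congr EFin; field.
exact: continuous_laplace_rate_pdf.
Qed.

Lemma mixed_pdfE (a c u : R) : a < c -> u != 0 ->
  mixed_pdf a c u = (((1 + a * u) * expR (- (a * u)) -
                      (1 + c * u) * expR (- (c * u))) / (2 * u ^+ 2))%:E.
Proof.
move=> ac u0.
pose F : R -> R := cst (- (2 * u ^+ 2)^-1) *
  ((cst 1 + id * cst u) * (expR \o - (id * cst u))).
have dF x : is_derive x (1 : R) F (laplace_rate_pdf x u).
  apply: is_derive_eq; rewrite /laplace_rate_pdf /= !fctE.
  by rewrite !scaler0 ?add0r ?addr0 /GRing.scale /= ?mulr1 ?mulr0; field.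
rewrite /mixed_pdf (integral_itv_primitive _ _ _ _ ac _ dF) /F ?fctE /=.
  by congr EFin; field.
exact: continuous_laplace_rate_pdf.
Qed.

Lemma mul1D_expRN_lt (x y : R) : 0 <= x -> x < y ->
  (1 + y) * expR (- y) < (1 + x) * expR (- x).
Proof.
move=> x0 xy; have yx0 : 0 < y - x by rewrite subr_gt0.
have E_gt := expR_gt1Dx (lt0r_neq0 yx0).
have -> : expR (- x) = expR (y - x) * expR (- y) by rewrite -expRD addrAC subrr add0r.
rewrite -subr_gt0.
have -> : (1 + x) * (expR (y - x) * expR (- y)) - (1 + y) * expR (- y) =
    expR (- y) * ((1 + x) * (expR (y - x) - 1 - (y - x)) + x * (y - x)) by ring.
rewrite mulr_gt0 ?expR_gt0 // ltr_pwDl ?mulr_ge0 ?(ltW yx0) //.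
by rewrite mulr_gt0 //; lra.
Qed.

Definition r2dp_ratio (alpha beta : R) : R :=
  (alpha ^+ 2 - beta ^+ 2) /
  (2 * ((1 + beta) * expR (- beta) - (1 + alpha) * expR (- alpha))).

Lemma r2dp_ratio_gt0 (alpha beta : R) : 0 <= alpha -> alpha < beta ->
  0 < r2dp_ratio alpha beta.
Proof.
move=> a0 ab; rewrite /r2dp_ratio -mulrNN -invrN divr_gt0 // oppr_gt0.
  by rewrite subr_lt0; nra.
by rewrite pmulr_rlt0 // subr_lt0 mul1D_expRN_lt.
Qed.

Lemma mixed_pdf0_ratio (a c u : R) : 0 <= a -> a < c -> 0 < u ->
  mixed_pdf a c 0 = ((r2dp_ratio (a * u) (c * u))%:E * mixed_pdf a c u)%E.
Proof.
move=> a0 ac u0; rewrite mixed_pdf0 // mixed_pdfE ?gt_eqF // -EFinM.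
have : (1 + c * u) * expR (- (c * u)) - (1 + a * u) * expR (- (a * u)) != 0.
  rewrite lt_eqF // subr_lt0; apply: mul1D_expRN_lt; last by rewrite ltr_pM2r.
  by rewrite mulr_ge0 // ltW.
by move=> N0; congr EFin; rewrite /r2dp_ratio; field; rewrite N0 gt_eqF.
Qed.

Lemma mixed_pdf_le_shift (a c u t t' : R) : 0 <= a -> a < c -> 0 < u ->
  0 <= t -> t' <= t + u ->
  (mixed_pdf a c t <= (r2dp_ratio (a * u) (c * u))%:E * mixed_pdf a c t')%E.
Proof.
move=> a0 ac u0 t0 tt'.
set K := r2dp_ratio (a * u) (c * u).
have [hu hu0 huE] : exists2 hu : R, 0 < hu & mixed_pdf a c u = hu%:E.
  rewrite mixed_pdfE ?gt_eqF //; eexists; last reflexivity.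
  rewrite divr_gt0 ?mulr_gt0 ?exprn_gt0 // subr_gt0 mul1D_expRN_lt ?ltr_pM2r //.
  by rewrite mulr_ge0 // ltW.
have := mixed_pdf_mul_le a c t u a0 t0 (ltW u0).
rewrite (mixed_pdf0_ratio a c u a0 ac u0) -/K huE -muleA (muleC hu%:E) muleA => cheb.
rewrite -(@lee_pmul2r _ hu%:E) ?lte_fin //; apply: le_trans cheb _.
apply: lee_wpmul2r; first by rewrite lee_fin ltW.
apply: lee_wpmul2l; last exact: mixed_pdf_nonincreasing.
rewrite lee_fin ltW //; apply: r2dp_ratio_gt0; first exact: mulr_ge0 a0 (ltW u0).
by rewrite ltr_pM2r.
Qed.

End r2dp_laplace.

Theorem theoremB4 (R : realType) (D : Type) (nbr : D -> D -> Prop)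
  (q : D -> R) (dq : R) (a c : R) (ac : a < c) :
  is_sensitivity nbr q dq -> 0 < dq -> 0 <= a ->
  let alpha := a * dq in
  let beta := c * dq in
  differentially_private nbr
    (ln ((alpha ^+ 2 - beta ^+ 2) /
         (2 * ((1 + beta) * expR (- beta) - (1 + alpha) * expR (- alpha)))))
    (r2dp_uniform_laplace_prob ac q).
Proof.
move=> [sens _] dq0 a0 alpha beta d d' ndd' S mS.
have K0 : 0 < r2dp_ratio alpha beta.
  by apply: r2dp_ratio_gt0; [exact: mulr_ge0 a0 (ltW dq0)|rewrite ltr_pM2r].
rewrite -/(r2dp_ratio alpha beta) lnK ?posrE //.
rewrite !r2dp_uniform_laplace_probE // muleCA.
apply: lee_wpmul2l; first by rewrite lee_fin invr_ge0 ltW // subr_gt0.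
rewrite -ge0_integralZl //; last 3 first.
- exact: measurable_funS (measurable_mixed_pdf a c (q d')).
- by move=> x _; exact: mixed_pdf_ge0.
- by rewrite lee_fin ltW.
apply: ge0_le_integral => //.
- by move=> x _; exact: mixed_pdf_ge0.
- exact: measurable_funS (measurable_mixed_pdf a c (q d)).
- by apply: measurable_funeM; exact: measurable_funS (measurable_mixed_pdf a c (q d')).
move=> x _; apply: mixed_pdf_le_shift => //.
by rewrite (le_trans (ler_distD (q d) x (q d'))) // lerD2l sens.
Qed.
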